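(* Let $\langle (x_n,y_n)\rangle_{n\in\mathbb{N}}$ be the solutions in $\mathbb{N}^2$ of $x^2-19\,y^2=1$, indexed so that $y_0<y_1<\cdots$. Let $\bar r,\bar s,\bar v,\bar u\in\mathbb{Z}$ satisfy \[171\,(\bar r^2+\bar r\bar s+5\bar s^2)^2-169\,(\bar v^2+\bar v\bar u+5\bar u^2)^2=2\] with $\bar r\neq\pm1$ or $\bar s\neq 0$. Then for every $\ell\geq 0$, \[ 39\,(\bar r^2+\bar r\bar s+5\bar s^2)(\bar v^2+\bar v\bar u+5\bar u^2)\nmid y_{2^{2\ell+1}}. \]
   Context: $(x_0,y_0)=(1,0)$, $(x_1,y_1)=(170,39)$, $x_n+y_n\sqrt{19}=(170+39\sqrt{19})^n$. *)

From Stdlib Require Import ZArith.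
Open Scope Z_scope.

(* pell n = (x_n, y_n) with x_n + y_n sqrt 19 = (170 + 39 sqrt 19)^n,
   i.e. the n-th nonnegative solution of x^2 - 19 y^2 = 1 ordered by y
   ((x_0,y_0) = (1,0), (x_1,y_1) = (170,39)). Multiplying by 170+39 sqrt 19
   gives the recurrence below. *)
Fixpoint pell (n : nat) : Z * Z :=
  match n with
  | O => (1, 0)
  | S m => let '(x, y) := pell m in (170 * x + 741 * y, 39 * x + 170 * y)
  end.

Definition pell_x (n : nat) : Z := fst (pell n).
Definition pell_y (n : nat) : Z := snd (pell n).

Definition Q (a b : Z) : Z := a * a + a * b + 5 * b * b.

From Stdlib Require Import ZArith Znumtheory Lia List.
Open Scope Z_scope.

(* Write eps = 170 + 39 sqrt 19, so that x_n + y_n sqrt 19 = eps^n.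

   Given 171 A^2 - 169 B^2 = 2 with A = Q r s, B = Q v u, the pair
   (X, Y) = (13 |B|, 3 A) solves X^2 - 19 Y^2 = -2.  By a descent (divide by
   eps while Y > 3, a finite computation below the point where the descent
   is guaranteed to stay nonnegative), every nonnegative solution of that
   equation is X + Y sqrt 19 = (13 + 3 sqrt 19) eps^k; since
   (13 + 3 sqrt 19)^2 = 2 eps this gives y_(2k+1) = X Y = 39 A |B|.
   On the other hand the y_n form a divisibility sequence in which
   gcd(y_m, y_n) divides y_1 = 39 whenever gcd(m, n) = 1.  As 2k+1 is
   coprime to 2^(2l+1), a divisor 39 A B of y_(2^(2l+1)) would divide 39,
   forcing A = 1, i.e. (r, s) = (+-1, 0). *)

(* The addition law eps^(m+n) = eps^m eps^n. *)
Lemma pell_add m n :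
  pell_x (m + n) = pell_x m * pell_x n + 19 * pell_y m * pell_y n /\
  pell_y (m + n) = pell_x m * pell_y n + pell_y m * pell_x n.
Proof.
  induction m as [|m [IHx IHy]]; unfold pell_x, pell_y in *; cbn [Nat.add pell].
  - destruct (pell n); cbn [fst snd]; split; ring.
  - destruct (pell (m + n)), (pell m); cbn [fst snd] in *.
    rewrite IHx, IHy; split; ring.
Qed.

Lemma pell_norm n : pell_x n * pell_x n - 19 * pell_y n * pell_y n = 1.
Proof.
  induction n as [|n IH]; unfold pell_x, pell_y in *; cbn [pell fst snd]; [ring|].
  destruct (pell n) as [x y]; cbn [fst snd] in *; rewrite <- IH; ring.
Qed.

Lemma pell_y_mul d m j : (d | pell_y m) -> (d | pell_y (j * m)).
Proof.
  intros Hm; induction j as [|j IH].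
  - exists 0; reflexivity.
  - destruct (pell_add m (j * m)) as [_ Ey]; simpl; rewrite Ey.
    apply Z.divide_add_r; [apply Z.divide_mul_r | apply Z.divide_mul_l]; assumption.
Qed.

(* A common divisor of y_m and y_n divides y_1 = 39 as soon as m and n
   satisfy a Bezout relation a m = 1 + b n: it divides
   y_(1 + b n) = 170 y_(b n) + 39 x_(b n), and it is coprime to x_(b n). *)
Lemma pell_y_common_divisor d m n a b :
  (a * m = 1 + b * n)%nat -> (d | pell_y m) -> (d | pell_y n) -> (d | 39).
Proof.
  intros Hbez Hm Hn.
  assert (Ham : (d | pell_y (1 + b * n))) by (rewrite <- Hbez; apply pell_y_mul, Hm).
  assert (Hbn : (d | pell_y (b * n))) by (apply pell_y_mul, Hn).
  destruct (pell_add 1 (b * n)) as [_ Ey]; rewrite Ey in Ham.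
  change (pell_x 1) with 170 in Ham; change (pell_y 1) with 39 in Ham.
  set (x := pell_x (b * n)) in *; set (y := pell_y (b * n)) in *.
  assert (H39x : (d | 39 * x)).
  { replace (39 * x) with ((170 * y + 39 * x) - 170 * y) by ring.
    apply Z.divide_sub_r; [assumption | apply Z.divide_mul_r, Hbn]. }
  assert (Hcop : rel_prime d x).
  { destruct Hbn as [w Hw].
    apply bezout_rel_prime, Bezout_intro with (-19 * w * y) x.
    rewrite <- (pell_norm (b * n)); fold x y; rewrite Hw at 2; ring. }
  apply Gauss with x; [rewrite Z.mul_comm|]; assumption.
Qed.

Lemma odd_inverse_mod_pow2 k L : exists a b : nat, (a * (2 * k + 1) = 1 + b * 2 ^ L)%nat.
Proof.
  induction L as [|L [a [b E]]]; [exists 1%nat, (2 * k)%nat; simpl; lia|].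
  rewrite Nat.pow_succ_r'.
  destruct (Nat.Even_or_Odd b) as [[c Hc] | [c Hc]]; subst b.
  - exists a, c; nia.
  - exists (a + 2 ^ L)%nat, (c + k + 1)%nat; nia.
Qed.

Definition small_neg2_solutions_only_3 : bool :=
  forallb (fun Y => orb (Y =? 3)
             (negb (Z.sqrt (19 * Y * Y - 2) * Z.sqrt (19 * Y * Y - 2) =? 19 * Y * Y - 2)))
          (map Z.of_nat (seq 0 56)).

Lemma neg2_small X Y :
  0 <= X -> 0 <= Y <= 55 -> X * X - 19 * Y * Y = -2 -> X = 13 /\ Y = 3.
Proof.
  intros HX HY E.
  assert (HXsq : Z.sqrt (19 * Y * Y - 2) = X).
  { replace (19 * Y * Y - 2) with (X * X) by lia; apply Z.sqrt_square, HX. }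
  assert (Hcheck : small_neg2_solutions_only_3 = true) by (vm_compute; reflexivity).
  unfold small_neg2_solutions_only_3 in Hcheck; rewrite forallb_forall in Hcheck.
  assert (HYin : In Y (map Z.of_nat (seq 0 56))).
  { replace Y with (Z.of_nat (Z.to_nat Y)) by lia; apply in_map, in_seq; lia. }
  specialize (Hcheck Y HYin); rewrite HXsq in Hcheck.
  destruct (Z.eqb_spec Y 3) as [-> | _]; cbn [orb] in Hcheck.
  - split; [rewrite <- HXsq|]; reflexivity.
  - replace (19 * Y * Y - 2) with (X * X) in Hcheck by lia.
    rewrite Z.eqb_refl in Hcheck; discriminate.
Qed.

(* Descent step: for a nonnegative solution with Y >= 56, dividing by eps
   gives a smaller nonnegative solution X' + Y' sqrt 19
   = (X + Y sqrt 19)(170 - 39 sqrt 19).  On solutions, X' >= 0 amounts to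
   19 Y^2 >= 57800, Y' >= 0 always holds, and Y' < Y amounts to Y > 3. *)
Lemma neg2_descent_step X Y :
  0 <= X -> 56 <= Y -> X * X - 19 * Y * Y = -2 ->
  let X' := 170 * X - 741 * Y in let Y' := 170 * Y - 39 * X in
  0 <= X' /\ 0 <= Y' < Y /\ X' * X' - 19 * Y' * Y' = -2.
Proof.
  intros HX HY E X' Y'; subst X' Y'; repeat split; try (rewrite <- E; ring).
  - destruct (Z_le_gt_dec (741 * Y) (170 * X)); [lia|].
    assert ((741 * Y - 170 * X) * (741 * Y + 170 * X) > 0) by nia; nia.
  - destruct (Z_le_gt_dec (39 * X) (170 * Y)); [lia|].
    assert ((39 * X - 170 * Y) * (39 * X + 170 * Y) > 0) by nia; nia.
  - destruct (Z_lt_le_dec (169 * Y) (39 * X)); [lia|].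
    assert ((169 * Y - 39 * X) * (169 * Y + 39 * X) >= 0) by nia; nia.
Qed.

Lemma neg2_solutions X Y :
  0 <= X -> 0 <= Y -> X * X - 19 * Y * Y = -2 ->
  exists k, X = 13 * pell_x k + 57 * pell_y k /\ Y = 3 * pell_x k + 13 * pell_y k.
Proof.
  intros HX HY; revert X HX; generalize HY; pattern Y; apply Z_lt_induction; [|exact HY].
  clear Y HY; intros Y IH HY X HX E.
  destruct (Z_lt_le_dec Y 56) as [Hsmall | Hbig].
  - destruct (neg2_small X Y) as [-> ->]; [lia | lia | assumption |].
    exists 0%nat; split; reflexivity.
  - destruct (neg2_descent_step X Y HX Hbig E) as (HX' & HY' & E').
    destruct (IH _ HY' (proj1 HY') _ HX' E') as [k [Ek1 Ek2]].
    exists (S k); unfold pell_x, pell_y in *; cbn [pell].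
    destruct (pell k) as [x y]; cbn [fst snd] in *.
    split; lia.
Qed.

(* Since (13 + 3 sqrt 19)^2 = 2 eps, the odd-indexed y factor as
   y_(2k+1) = (13 x_k + 57 y_k)(3 x_k + 13 y_k). *)
Lemma pell_y_odd k :
  pell_y (2 * k + 1) = (13 * pell_x k + 57 * pell_y k) * (3 * pell_x k + 13 * pell_y k).
Proof.
  replace (2 * k + 1)%nat with (k + S k)%nat by lia.
  destruct (pell_add k (S k)) as [_ ->].
  unfold pell_x, pell_y; cbn [pell]; destruct (pell k); cbn [fst snd]; ring.
Qed.

(* The form Q is positive definite: 4 Q a b = (2a + b)^2 + 19 b^2. *)
Lemma Q_nonneg a b : 0 <= Q a b.
Proof. unfold Q; nia. Qed.

Lemma Q_eq_1 a b : Q a b = 1 -> (a = 1 \/ a = -1) /\ b = 0.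
Proof.
  unfold Q; intros E.
  assert (Hb : b = 0) by nia; subst b.
  split; [nia | reflexivity].
Qed.

Theorem mainTheorem8 (r s v u : Z) :
  171 * (Q r s) ^ 2 - 169 * (Q v u) ^ 2 = 2 ->
  ((r <> 1 /\ r <> -1) \/ s <> 0) ->
  forall l : nat, ~ (39 * Q r s * Q v u | pell_y (Nat.pow 2 (2 * l + 1))).
Proof.
  intros Heq Hrs l Hdiv.
  pose proof (Q_nonneg r s) as HA.
  set (A := Q r s) in *; set (B := Q v u) in *.
  (* (13 |B|, 3 A) solves X^2 - 19 Y^2 = -2, so 39 A |B| = y_(2k+1). *)
  destruct (neg2_solutions (13 * Z.abs B) (3 * A)) as [k [EX EY]];
    [lia | lia | rewrite !Z.pow_2_r in Heq; lia |].
  assert (Hodd : (39 * A * B | pell_y (2 * k + 1))).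
  { rewrite pell_y_odd, <- EX, <- EY.
    replace (13 * Z.abs B * (3 * A)) with (Z.abs (39 * A * B))
      by (rewrite !Z.abs_mul, (Z.abs_eq A) by exact HA; change (Z.abs 39) with 39; ring).
    apply Z.divide_abs_r, Z.divide_refl. }
  (* gcd(2k+1, 2^(2l+1)) = 1, hence 39 A B divides 39 and A = 1. *)
  destruct (odd_inverse_mod_pow2 k (2 * l + 1)) as [a [b Hbez]].
  pose proof (pell_y_common_divisor _ _ _ _ _ Hbez Hodd Hdiv) as H39.
  assert (HAB : (A * B | 1)).
  { apply (Z.mul_divide_cancel_l _ _ 39); [lia|].
    rewrite Z.mul_assoc, Z.mul_1_r; exact H39. }
  assert (HA1 : A = 1).
  { apply Z.divide_1_r_nonneg; [exact HA|].
    apply (Z.divide_trans _ (A * B)); [apply Z.divide_factor_l | exact HAB]. }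
  destruct (Q_eq_1 r s HA1) as [[-> | ->] ->]; lia.
Qed.
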